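(* For all $n\ge1$, $k\ge1$ and every $\pi\in\mathbf{C}(n,k)$, the list $\mathcal{C}(\pi)$ has flip sequence $\sigma^k_n$; that is, if $\mathcal{C}(\pi)=L_1,L_2,\dots,L_N$ and $\sigma^k_n=f_1,f_2,\dots,f_{N'}$, then $N'=N-1$ and $L_{t+1}=\mathrm{flip}_{f_t}(L_t)$ for all $1\le t\le N-1$.
   Context: Fix integers $n\ge1$, $k\ge1$. A $k$-coloured permutation of $\{1,\dots,n\}$ is a sequence $\pi=p_1p_2\cdots p_n$ with $p_i=v_i^{c_i}$, where $v_1\cdots v_n$ is a permutation of $\{1,\dots,n\}$ and each $c_i\in\{0,\dots,k-1\}$; the set of these is $\mathbf{C}(n,k)$. A pre-perm is a prefix $p_1\cdots p_j$ ($1\le j\le n$) of some element of $\mathbf{C}(n,k)$. For $p=v^c$ and integer $s$, $p^{+s}=v^{(c+s)\bmod k}$; for $\mathbf{p}=p_1\cdots p_j$, $\mathbf{p}^{+s}=p_1^{+s}\cdots p_j^{+s}$. For $1\le i\le n$ and $\pi=p_1\cdots p_n$, the flip $\mathrm{flip}_i(\pi)=p_i^{+1}p_{i-1}^{+1}\cdots p_1^{+1}p_{i+1}\cdots p_n$ (reverse the first $i$ entries and increment their colours mod $k$). For a pre-perm $\mathbf{p}$ of length $j$, $\rho(\mathbf{p})=r_1\cdots r_m$ ($m=kj$) is the concatenation $\mathbf{p}^{+(k-1)}\mathbf{p}^{+(k-2)}\cdots\mathbf{p}^{+0}$ viewed circularly (indices mod $m$), and $\rho(\mathbf{p})_i=r_{i-j+1}\cdots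 r_{i-1}$ (length $j-1$, indices mod $m$). The list $\mathcal{C}(\mathbf{p})$: if $j=1$, $\mathcal{C}(p_1)=p_1^{+0},p_1^{+1},\dots,p_1^{+(k-1)}$; if $j\ge2$, $\mathcal{C}(\mathbf{p})$ is the concatenation for $i=m,m-1,\dots,1$ of the lists obtained from $\mathcal{C}(\rho(\mathbf{p})_i)$ by appending $r_i$ to every entry. The sequence $\sigma^k_n$ is defined recursively by $\sigma^k_1=1^{k-1}$ (the value $1$ repeated $k-1$ times; empty if $k=1$) and, for $n>1$, $\sigma^k_n=(\sigma^k_{n-1},n)^{kn-1},\sigma^k_{n-1}$, i.e. $kn-1$ copies of the block ''$\sigma^k_{n-1}$ followed by $n$'', followed by one more copy of $\sigma^k_{n-1}$. *)

From mathcomp Require Import all_boot.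
Set Implicit Arguments. Unset Strict Implicit. Unset Printing Implicit Defensive.

(* A coloured element v^c is the pair (v, c) : nat * nat. *)
Definition celt := (nat * nat)%type.

Definition is_cperm (n k : nat) (pi : seq celt) : Prop :=
  size pi = n /\ perm_eq (map fst pi) (iota 1 n) /\ all (fun x => x.2 < k) pi.

Definition cshift (k : nat) (s : nat) (x : celt) : celt := (x.1, (x.2 + s) %% k).
Definition pshift (k : nat) (s : nat) (p : seq celt) : seq celt := map (cshift k s) p.

Definition flip (k : nat) (i : nat) (pi : seq celt) : seq celt :=
  rev (pshift k 1 (take i pi)) ++ drop i pi.

(* rho(p) = p^{+(k-1)} p^{+(k-2)} ... p^{+0}, as a sequence r_1 .. r_m (0-based storage) *)
Definition rho (k : nat) (p : seq celt) : seq celt :=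
  flatten [seq pshift k (k - 1 - s) p | s <- iota 0 k].

(* r_i, 1 <= i <= m *)
Definition rho_elt (k : nat) (p : seq celt) (i : nat) : celt :=
  nth (0, 0) (rho k p) ((i + size (rho k p) - 1) %% size (rho k p)).

(* rho(p)_i = r_{i-j+1} ... r_{i-1}, indices taken circularly mod m *)
Definition rho_win (k : nat) (p : seq celt) (i : nat) : seq celt :=
  let r := rho k p in let m := size r in let j := size p in
  [seq nth (0, 0) r ((i + (m - j) + t) %% m) | t <- iota 0 (j - 1)].

(* The list C(p); fuel = size p makes recursion structural on length. *)
Fixpoint Clist_aux (k : nat) (fuel : nat) (p : seq celt) : seq (seq celt) :=
  match fuel with
  | 0 => [::]
  | f.+1 =>
    if size p == 1 then [seq [:: cshift k s (head (0, 0) p)] | s <- iota 0 k]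
    else flatten [seq [seq rcons L (rho_elt k p i) | L <- Clist_aux k f (rho_win k p i)]
                 | i <- rev (iota 1 (k * size p))]
  end.

Definition Clist (k : nat) (p : seq celt) : seq (seq celt) := Clist_aux k (size p) p.

Fixpoint sigma (k n : nat) : seq nat :=
  match n with
  | 0 => [::]
  | n'.+1 =>
    if n' is 0 then nseq (k - 1) 1
    else flatten (nseq (k * n - 1) (rcons (sigma k n') n)) ++ sigma k n'
  end.

From mathcomp Require Import all_boot.
From mathcomp Require Import zify.
Set Implicit Arguments. Unset Strict Implicit. Unset Printing Implicit Defensive.

(* The list C(p) is generated by the flip sequence sigma^k_n, by induction on
   n = size p.  We prove the stronger invariant (gray_invariant) that C(p) is
   the trajectory of p^{+0} under the flips of sigma^k_n and that this
   trajectory ends at rev (p^{+(k-1)}).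
   - Flip trajectories: the list of states visited by a sequence of flips,
     how it behaves under concatenation, and that flips of length <= size q
     commute with appending a fixed last letter to q.
   - The circular word rho(p): reading it at a position x (mod kn), and the
     fact that moving n positions to the right lowers the colour by one.
   - Windows: for n >= 2, C(p) is the concatenation over i = kn, ..., 1 of the
     blocks C(rho(p)_i) with r_i appended.  By induction each block is a
     trajectory of sigma^k_{n-1} starting at (rho(p)_i r_i)^{+0} and ending at
     rev (rho(p)_i^{+(k-1)}) r_i, and one flip of length n takes the end of
     block i+1 to the start of block i (window_step).  The first block starts
     at p^{+0} and the last one ends at rev (p^{+(k-1)}).
   - Chaining these kn blocks, linked by flips of length n, gives exactly the
     trajectory of sigma^k_n = (sigma^k_{n-1}, n)^{kn-1}, sigma^k_{n-1}
     (flip_traj_chain, gray_invariantS). *)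

Lemma cshiftC k a b x : cshift k a (cshift k b x) = cshift k (b + a) x.
Proof. by rewrite /cshift /= modnDml addnA. Qed.

Lemma cshiftk k x : cshift k k x = cshift k 0 x.
Proof. by rewrite /cshift modnDr addn0. Qed.

Fixpoint flip_traj k (s : seq nat) (x : seq celt) : seq (seq celt) :=
  if s is f :: s' then x :: flip_traj k s' (flip k f x) else [:: x].

Definition flip_last k (s : seq nat) (x : seq celt) : seq celt :=
  foldl (fun y f => flip k f y) x s.

Lemma size_flip_traj k s x : size (flip_traj k s x) = (size s).+1.
Proof. by elim: s x => //= f s IH x; rewrite IH. Qed.

(* Consecutive entries of a trajectory differ by the corresponding flip:
   this is the form in which the theorem states "has flip sequence s". *)
Lemma nth_flip_traj k s x t : 1 <= t <= size s ->
  nth [::] (flip_traj k s x) t =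
  flip k (nth 0 s (t - 1)) (nth [::] (flip_traj k s x) (t - 1)).
Proof.
elim: s x t => [|f s IH] x [|[|t]] //= Ht.
- by case: s {IH Ht}.
- by rewrite (IH (flip k f x) t.+1) //= subn1.
Qed.

Lemma flip_traj_cat k s1 f s2 x :
  flip_traj k (s1 ++ f :: s2) x =
  flip_traj k s1 x ++ flip_traj k s2 (flip k f (flip_last k s1 x)).
Proof. by elim: s1 x => //= g s1 IH x; rewrite IH. Qed.

Lemma flip_last_cat k s1 f s2 x :
  flip_last k (s1 ++ f :: s2) x = flip_last k s2 (flip k f (flip_last k s1 x)).
Proof. by rewrite /flip_last foldl_cat. Qed.

Lemma size_flip k f q : size (flip k f q) = size q.
Proof.
rewrite /flip size_cat size_rev size_map size_take size_drop.
by case: ltnP => H; lia.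
Qed.

Lemma flip_rcons k f q a :
  f <= size q -> flip k f (rcons q a) = rcons (flip k f q) a.
Proof.
by move=> Hf; rewrite /flip drop_rcons // -cats1 takel_cat // rcons_cat.
Qed.

Lemma flip_traj_rcons k (s : seq nat) q a : (forall f, f \in s -> f <= size q) ->
  [seq rcons L a | L <- flip_traj k s q] = flip_traj k s (rcons q a).
Proof.
elim: s q => [|f s IH] q Hs //=.
rewrite flip_rcons ?Hs ?mem_head // IH // => g Hg.
by rewrite size_flip; apply: Hs; rewrite in_cons Hg orbT.
Qed.

Lemma flip_last_rcons k (s : seq nat) q a : (forall f, f \in s -> f <= size q) ->
  flip_last k s (rcons q a) = rcons (flip_last k s q) a.
Proof.
elim: s q => [|f s IH] q Hs //=.
rewrite /flip_last /= -!/(flip_last _ _ _) flip_rcons ?Hs ?mem_head // IH //.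
by move=> g Hg; rewrite size_flip; apply: Hs; rewrite in_cons Hg orbT.
Qed.

(* Chaining: if one flip g links the end of block i+1 (a trajectory of S) to
   the start of block i, then the blocks l+1, ..., 1 together form the
   trajectory of (S, g)^l, S. *)
Lemma flip_traj_chain k S g (start : nat -> seq celt) :
  (forall i, flip k g (flip_last k S (start i.+1)) = start i) ->
  forall l,
  flatten [seq flip_traj k S (start i) | i <- rev (iota 1 l.+1)] =
    flip_traj k (flatten (nseq l (rcons S g)) ++ S) (start l.+1) /\
  flip_last k (flatten (nseq l (rcons S g)) ++ S) (start l.+1) =
    flip_last k S (start 1).
Proof.
move=> link; elim=> [|l [IHtraj IHlast]]; first by rewrite /= cats0.
have -> : iota 1 l.+2 = rcons (iota 1 l.+1) l.+2.
  by rewrite -cats1 -[[:: l.+2]]/(iota (1 + l.+1) 1) -iotaD addn1.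
have -> : flatten (nseq l.+1 (rcons S g)) ++ S =
          S ++ g :: (flatten (nseq l (rcons S g)) ++ S).
  by rewrite /= -catA cat_rcons.
rewrite rev_rcons /= flip_traj_cat flip_last_cat link.
by rewrite IHtraj IHlast.
Qed.

Lemma flip_traj_nseq1 k l a x :
  flip_traj k (nseq l 1) [:: cshift k a x] =
  [seq [:: cshift k s x] | s <- iota a l.+1].
Proof. by elim: l a => [|l IH] a //=; rewrite /flip /= cshiftC addn1 IH. Qed.

Lemma flip_last_nseq1 k l a x :
  flip_last k (nseq l 1) [:: cshift k a x] = [:: cshift k (a + l) x].
Proof.
elim: l a => [|l IH] a; first by rewrite addn0.
by rewrite /flip_last /= -/(flip_last _ _ _) /flip /= cshiftC IH addn1 addSnnS.
Qed.

Lemma sigma_le k n f : f \in sigma k n -> f <= n.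
Proof.
elim: n f => [|n IH] f //=; case: n IH => [|n] IH; first by case/nseqP=> ->.
rewrite mem_cat => /orP[|/IH/leqW //].
case/flattenP=> s /nseqP[-> _]; rewrite mem_rcons in_cons.
by case/orP=> [/eqP -> // | /IH/leqW].
Qed.

Lemma nth_flatten_const (T : Type) (d : T) (F : nat -> seq T) n a l s t :
  (forall i, size (F i) = n) -> s < l -> t < n ->
  nth d (flatten (map F (iota a l))) (s * n + t) = nth d (F (a + s)) t.
Proof.
move=> HF; elim: l a s => // l IH a [|s] Hs Ht /=.
- by rewrite mul0n add0n nth_cat HF Ht addn0.
- rewrite nth_cat HF mulSn -addnA ltnNge leq_addr /= addKn IH //.
  by rewrite addSnnS.
Qed.

Lemma size_rho k p : size (rho k p) = k * size p.
Proof.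
rewrite /rho size_flatten sumnE /shape !big_map (eq_bigr (fun=> size p)) => [|s _].
  by rewrite big_const_seq count_predT size_iota iter_addn_0 mulnC.
exact: size_map.
Qed.

Definition rho_at k p x := nth (0, 0) (rho k p) (x %% (k * size p)).

Lemma rho_elt_at k p i : rho_elt k p i = rho_at k p (i + k * size p - 1).
Proof. by rewrite /rho_elt /rho_at size_rho. Qed.

Lemma rho_win_at k p i : rho_win k p i =
  [seq rho_at k p (i + (k * size p - size p) + t) | t <- iota 0 (size p - 1)].
Proof. by rewrite /rho_win /rho_at size_rho. Qed.

Lemma size_rho_win k p i : size (rho_win k p i) = size p - 1.
Proof. by rewrite /rho_win size_map size_iota. Qed.

Lemma lt_block s t k n : s < k -> t < n -> s * n + t < k * n.
Proof.
move=> Hs Ht; apply: (@leq_trans (s.+1 * n)); first by rewrite mulSn addnC ltn_add2r.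
by rewrite leq_mul2r Hs orbT.
Qed.

Lemma rho_at_block k p x s t c : s < k -> t < size p ->
  x = c * (k * size p) + (s * size p + t) ->
  rho_at k p x = cshift k (k - 1 - s) (nth (0, 0) p t).
Proof.
move=> Hs Ht ->; rewrite /rho_at modnMDl modn_small ?lt_block //.
rewrite /rho nth_flatten_const ?add0n /pshift ?(nth_map (0, 0)) //.
by move=> i; rewrite size_map.
Qed.

Lemma block_decomp k n x : 0 < n -> 0 < k ->
  exists c s t, [/\ s < k, t < n & x = c * (k * n) + (s * n + t)].
Proof.
move=> Hn Hk; set v := x %% (k * n).
have Hv : v < k * n by rewrite ltn_pmod // muln_gt0 Hk.
exists (x %/ (k * n)), (v %/ n), (v %% n); split.
- by rewrite ltn_divLR.
- exact: ltn_pmod.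
- by rewrite -divn_eq -divn_eq.
Qed.

Section CircularReading.
Variables (k : nat) (p : seq celt).
Hypotheses (k_gt0 : 0 < k) (p_nonempty : 0 < size p).

Lemma rho_at_reduced x : cshift k 0 (rho_at k p x) = rho_at k p x.
Proof.
have [c [s [t [Hs Ht Hx]]]] := block_decomp x p_nonempty k_gt0.
by rewrite (rho_at_block Hs Ht Hx) cshiftC addn0.
Qed.

Lemma rho_at_rotate u : cshift k 1 (rho_at k p (u + size p)) = rho_at k p u.
Proof.
have [c [s [t [Hs Ht Hu]]]] := block_decomp u p_nonempty k_gt0.
rewrite (rho_at_block Hs Ht Hu).
case: (ltnP s.+1 k) => Hs1.
- rewrite (@rho_at_block _ _ _ s.+1 t c) // ?cshiftC; last by rewrite Hu mulSn; lia.
  by congr cshift; lia.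
- have Hsk : s.+1 = k by apply/eqP; rewrite eqn_leq Hs1 Hs.
  rewrite (@rho_at_block _ _ _ 0 t c.+1) // ?cshiftC; last first.
    by rewrite Hu -Hsk !mulSn; lia.
  by rewrite subn0 subnK // cshiftk; congr cshift; lia.
Qed.

End CircularReading.

Definition block_start k p i := rcons (pshift k 0 (rho_win k p i)) (rho_elt k p i).

Lemma map_iotaSr (T : Type) (f : nat -> T) l :
  map f (iota 0 l.+1) = rcons (map f (iota 0 l)) (f l).
Proof. by rewrite -addn1 iotaD map_cat cats1. Qed.

Lemma map_iotaSl (T : Type) (f : nat -> T) l :
  map f (iota 0 l.+1) = f 0 :: map (fun t => f t.+1) (iota 0 l).
Proof.
have E : iota 1 l = map (addn 1) (iota 0 l) by rewrite -iotaDl.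
by rewrite /= E -map_comp.
Qed.

Lemma flip_full k w a : 0 < k ->
  flip k (size w).+1 (rcons (rev (pshift k (k - 1) w)) a) =
  cshift k 1 a :: pshift k 0 w.
Proof.
move=> Hk.
rewrite /flip take_oversize ?drop_oversize ?size_rcons ?size_rev ?size_map // cats0.
rewrite /pshift map_rcons rev_rcons map_rev revK -map_comp; congr (_ :: _).
by apply: eq_map => x /=; rewrite cshiftC subnK // cshiftk.
Qed.

Lemma window_step k p i : 0 < k -> 0 < size p ->
  cshift k 1 (rho_elt k p i.+1) :: pshift k 0 (rho_win k p i.+1) =
  block_start k p i.
Proof.
move=> Hk Hp; rewrite /block_start !rho_win_at !rho_elt_at /pshift -!map_comp.
have [l Hl] : exists l, size p = l.+1 by exists (size p).-1; lia.
have Hnm : size p <= k * size p by rewrite leq_pmull.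
rewrite Hl in Hnm *; rewrite subSS subn0.
transitivity [seq rho_at k p (i + (k * l.+1 - l.+1) + t) | t <- iota 0 l.+1].
- rewrite map_iotaSl; congr (_ :: _).
  + rewrite (_ : i.+1 + k * l.+1 - 1 = i + (k * l.+1 - l.+1) + 0 + size p); last lia.
    exact: rho_at_rotate.
  + by apply: eq_map => t /=; rewrite rho_at_reduced //; congr rho_at; lia.
- rewrite map_iotaSr; congr rcons; last by congr rho_at; lia.
  by apply: eq_map => t /=; rewrite rho_at_reduced.
Qed.

Lemma first_block_start k p : 0 < k -> 0 < size p ->
  block_start k p (k * size p) = pshift k 0 p.
Proof.
move=> Hk Hp; rewrite /block_start rho_win_at rho_elt_at /pshift -map_comp.
rewrite -[in RHS](take_size p) -(map_nth_iota0 (0, 0)) // -map_comp.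
have [l Hl] : exists l, size p = l.+1 by exists (size p).-1; lia.
have Hnm : size p <= k * size p by rewrite leq_pmull.
have Hkm : (k - 1) * l.+1 = k * l.+1 - l.+1 by rewrite mulnBl mul1n.
rewrite Hl in Hnm *; rewrite subSS subn0 map_iotaSr; congr rcons.
- apply/eq_in_map => t; rewrite mem_iota => /andP[_ Ht] /=.
  rewrite (@rho_at_block _ _ _ (k - 1) t 1) ?Hl; [by rewrite cshiftC subnn | lia..].
- rewrite /= (@rho_at_block _ _ _ (k - 1) l 1) ?Hl; [by rewrite subnn | lia..].
Qed.

Lemma last_block_end k p0 p' : 0 < k ->
  rcons (rev (pshift k (k - 1) (rho_win k (p0 :: p') 1))) (rho_elt k (p0 :: p') 1)
  = rev (pshift k (k - 1) (p0 :: p')).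
Proof.
move=> Hk; set p := p0 :: p'.
have Hsp : size p = (size p').+1 by [].
have Hnm : size p <= k * size p by rewrite leq_pmull.
have Hkm : (k - 1) * size p = k * size p - size p by rewrite mulnBl mul1n.
rewrite Hsp in Hnm Hkm; rewrite /pshift map_cons rev_cons; congr rcons.
- congr rev; rewrite -[in RHS](take_size p') -(map_nth_iota0 (0, 0)) //.
  rewrite rho_win_at -!map_comp Hsp subSS subn0.
  apply/eq_in_map => t; rewrite mem_iota => /andP[_ Ht] /=.
  rewrite (@rho_at_block _ _ _ (k - 1) t.+1 0) ?Hsp; [by rewrite cshiftC subnn | lia..].
- rewrite rho_elt_at (@rho_at_block _ _ _ 0 0 1) ?Hsp; [by rewrite subn0 | lia..].
Qed.

Lemma Clist_blocks k p n : size p = n.+2 ->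
  Clist k p = flatten [seq [seq rcons L (rho_elt k p i) | L <- Clist k (rho_win k p i)]
                      | i <- rev (iota 1 (k * n.+2))].
Proof.
move=> Hs; transitivity (flatten [seq [seq rcons L (rho_elt k p i)
    | L <- Clist_aux k n.+1 (rho_win k p i)] | i <- rev (iota 1 (k * n.+2))]).
  by rewrite /Clist Hs /= Hs.
congr flatten; apply: eq_map => i.
by rewrite /Clist size_rho_win Hs.
Qed.

Definition gray_invariant k n :=
  forall p, size p = n ->
  Clist k p = flip_traj k (sigma k n) (pshift k 0 p) /\
  flip_last k (sigma k n) (pshift k 0 p) = rev (pshift k (k - 1) p).

Lemma gray_invariant1 k : 0 < k -> gray_invariant k 1.
Proof.
move=> Hk [|x [|]] //= _.
have Ek : k = (k - 1).+1 by lia.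
rewrite /Clist /= /pshift /= flip_traj_nseq1 flip_last_nseq1 add0n.
by rewrite -Ek.
Qed.

Lemma gray_invariantS k n : 0 < k -> gray_invariant k n.+1 -> gray_invariant k n.+2.
Proof.
move=> Hk IH [//|p0 p'] Hp; set p := p0 :: p'; set S := sigma k n.+1.
have Hsig : sigma k n.+2 = flatten (nseq (k * n.+2 - 1) (rcons S n.+2)) ++ S by [].
have Hwin i : size (rho_win k p i) = n.+1 by rewrite size_rho_win Hp subSS subn0.
have Hshort i f : f \in S -> f <= size (pshift k 0 (rho_win k p i)).
  by move=> /sigma_le; rewrite size_map Hwin.
have block_traj i : [seq rcons L (rho_elt k p i) | L <- Clist k (rho_win k p i)] =
                    flip_traj k S (block_start k p i).
  by rewrite (IH _ (Hwin i)).1 (flip_traj_rcons k _ (Hshort i)).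
have block_end i : flip_last k S (block_start k p i) =
    rcons (rev (pshift k (k - 1) (rho_win k p i))) (rho_elt k p i).
  by rewrite /block_start (flip_last_rcons k _ (Hshort i)) (IH _ (Hwin i)).2.
have link i : flip k n.+2 (flip_last k S (block_start k p i.+1)) = block_start k p i.
  rewrite block_end -(Hwin i.+1) flip_full // -window_step //; lia.
have Em : k * n.+2 = (k * n.+2 - 1).+1 by rewrite subn1 prednK // muln_gt0 Hk.
have [chain_traj chain_last] := flip_traj_chain link (k * n.+2 - 1).
have start_first : block_start k p (k * n.+2) = pshift k 0 p.
  by rewrite -Hp first_block_start ?Hp.
rewrite -Em start_first in chain_traj chain_last.
rewrite (Clist_blocks k Hp) Hsig (eq_map block_traj); split => //.
by rewrite chain_last block_end last_block_end.
Qed.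

Lemma gray_invariant_all k n : 0 < k -> gray_invariant k n.+1.
Proof.
move=> Hk; elim: n => [|n IH]; first exact: gray_invariant1.
exact: gray_invariantS.
Qed.

(* Only the length of pi matters: C(pi) is the sigma^k_n-trajectory of pi^{+0}. *)
Theorem lemma2 (n k : nat) (pi : seq celt) :
  1 <= n -> 1 <= k -> is_cperm n k pi ->
  size (sigma k n) + 1 = size (Clist k pi) /\
  (forall t : nat, 1 <= t <= size (Clist k pi) - 1 ->
     nth [::] (Clist k pi) t =
     flip k (nth 0 (sigma k n) (t - 1)) (nth [::] (Clist k pi) (t - 1))).
Proof.
move=> Hn Hk [Hsize _]; case: n Hn Hsize => [//|n] _ Hsize.
have [-> _] := gray_invariant_all Hk Hsize.
rewrite size_flip_traj addn1; split => // t Ht.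
by apply: nth_flip_traj; lia.
Qed.
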